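(* For every admissible sequence of bins $\sigma$ and all integers $s',\ell'\ge0$, $R(\sigma,s',0)=\mathrm{OPT}(\sigma,s',0)$ and $R(\sigma,0,\ell')=\mathrm{OPT}(\sigma,0,\ell')$.
   Context: Fix an integer $S>1$, $L=2S-1$, $M=4S-3$. Bins have integer sizes in $[S,M]$ and arrive in a sequence $\sigma$, admissible if it ends with at least as many bins of size $M$ as there are items under consideration. A packing assigns every item to a bin with total item size in each bin at most the bin size; its cost is the sum of the sizes of bins receiving at least one item. A packing is valid if each empty bin is smaller than every item packed in a later bin. A bin is wasteful if its empty space is at least the size of some item packed in a later bin; a packing is thrifty if no bin is wasteful. A partial packing of a finite sequence of bins is reasonable if every bin $b$ of that sequence contains: one item of size $S$ if $\mathrm{size}(b)\in[S,L-1]$; one item of size $L$ if $\mathrm{size}(b)=L$; two items of size $S$ or one item of size $L$ if $\mathrm{size}(b)\in[L+1,L+S-1]$; one item of size $S$ and one of size $L$ if $\mathrm{size}(b)=L+S$; three items of size $S$ or one item of size $S$ and one of size $L$ if $\mathrm{size}(b)\in[L+S+1,2L-1]$. The key bin of a packing is the first bin after which no item of size $L$ remains unpacked or at most two items of size $S$ remain unpacked; the front is the restriction of the packing to the prefix ending with the key bin. A packing is reasonable if it is thrifty and its front is reasonable. $\mathrm{OPT}(\sigma,s,\ell)$ is the minimum cost of a valid packing of $s$ items of size $S$ and $\ell$ items of size $L$ into $\sigma$; $R(\sigma,s,\ell)$ is the maximum cost of a reasonable packing of these items into $\sigma$. *)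

From mathcomp Require Import all_boot.
Set Implicit Arguments. Unset Strict Implicit. Unset Printing Implicit Defensive.

Definition Lsz (S : nat) : nat := 2 * S - 1.
Definition Msz (S : nat) : nat := 4 * S - 3.

(* A sequence of bins is a list of bin sizes.  Items of equal size are
   indistinguishable, so a packing is given by, for each bin i, the pair
   (number of items of size S, number of items of size L) put in bin i. *)
Definition packing := seq (nat * nat).

Definition load (S : nat) (x : nat * nat) : nat := x.1 * S + x.2 * Lsz S.
Definition nonempty (x : nat * nat) : bool := 0 < x.1 + x.2.

Definition binc (p : packing) (i : nat) : nat * nat := nth (0, 0) p i.
Definition bsz (sigma : seq nat) (i : nat) : nat := nth 0 sigma i.

Definition is_packing (S : nat) (sigma : seq nat) (s l : nat) (p : packing) : Prop :=
  [/\ size p = size sigma,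
      sumn (map fst p) = s,
      sumn (map snd p) = l &
      forall i, i < size p -> load S (binc p i) <= bsz sigma i].

Definition cost (sigma : seq nat) (p : packing) : nat :=
  sumn [seq (if nonempty x.2 then x.1 else 0) | x <- zip sigma p].

Definition valid (S : nat) (sigma : seq nat) (p : packing) : Prop :=
  forall i j, i < j -> j < size p -> ~~ nonempty (binc p i) ->
    (0 < (binc p j).1 -> bsz sigma i < S) /\
    (0 < (binc p j).2 -> bsz sigma i < Lsz S).

Definition wasteful (S : nat) (sigma : seq nat) (p : packing) (i : nat) : Prop :=
  exists j, [/\ i < j, j < size p &
    (0 < (binc p j).1 /\ S <= bsz sigma i - load S (binc p i)) \/
    (0 < (binc p j).2 /\ Lsz S <= bsz sigma i - load S (binc p i))].

Definition thrifty (S : nat) (sigma : seq nat) (p : packing) : Prop :=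
  forall i, i < size p -> ~ wasteful S sigma p i.

Definition reasonable_bin (S c : nat) (x : nat * nat) : bool :=
  let L := Lsz S in
  if (S <= c) && (c <= L - 1) then x == (1, 0)
  else if c == L then x == (0, 1)
  else if (L + 1 <= c) && (c <= L + S - 1) then (x == (2, 0)) || (x == (0, 1))
  else if c == L + S then x == (1, 1)
  else if (L + S + 1 <= c) && (c <= 2 * L - 1) then (x == (3, 0)) || (x == (1, 1))
  else false.

Definition front_len (p : packing) : nat :=
  find (fun k => (sumn (map snd (drop k p)) == 0) || (sumn (map fst (drop k p)) <= 2))
       (iota 0 (size p).+1).

Definition reasonable (S : nat) (sigma : seq nat) (p : packing) : Prop :=
  thrifty S sigma p /\
  forall i, i < front_len p -> reasonable_bin S (bsz sigma i) (binc p i).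

Definition admissible (S : nat) (sigma : seq nat) (n : nat) : Prop :=
  n <= size sigma /\ all (fun c => c == Msz S) (drop (size sigma - n) sigma).

Definition IsOPT (S : nat) (sigma : seq nat) (s l v : nat) : Prop :=
  (exists p, [/\ is_packing S sigma s l p, valid S sigma p & cost sigma p = v]) /\
  (forall p, is_packing S sigma s l p -> valid S sigma p -> v <= cost sigma p).

Definition IsR (S : nat) (sigma : seq nat) (s l v : nat) : Prop :=
  (exists p, [/\ is_packing S sigma s l p, reasonable S sigma p & cost sigma p = v]) /\
  (forall p, is_packing S sigma s l p -> reasonable S sigma p -> cost sigma p <= v).

From mathcomp Require Import all_boot zify.

Set Implicit Arguments.
Unset Strict Implicit.
Unset Printing Implicit Defensive.

(* With items of a single size w, a thrifty packing puts an item into bin i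
   only if every valid packing of the same items also uses bin i: otherwise
   that packing leaves bin i (of size >= w) empty, so it packs nothing later,
   while each earlier bin j holds at most as many items as the thrifty packing
   puts there (whose leftover space in j is below w); this is too few items.
   Hence all thrifty packings have the same cost, which is the least cost of a
   valid packing.  The front of a packing using one item size is empty, so the
   reasonable packings are exactly the thrifty ones, and the greedy first-fit
   packing is one of them: admissibility leaves room for all items in the
   final bins of size M. *)

(* A packing of items of one size [w] into bins of capacities [c 0, ..., c (n-1)]
   is described by the numbers [k i] of items put into bin [i]. *)
Section SingleSizeFill.
Variables (w n : nat) (c : nat -> nat).

Definition fill_fits (k : nat -> nat) : Prop := forall i, i < n -> k i * w <= c i.

Definition thrifty_fill (k : nat -> nat) : Prop :=
  forall i j, i < j -> j < n -> 0 < k j -> c i - k i * w < w.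

Definition valid_fill (k : nat -> nat) : Prop :=
  forall i j, i < j -> j < n -> k i = 0 -> 0 < k j -> c i < w.

Definition fill_cost (k : nat -> nat) : nat :=
  \sum_(0 <= i < n) (if 0 < k i then c i else 0).

Lemma thrifty_fill_valid k : thrifty_fill k -> valid_fill k.
Proof. by move=> thr_k i j ij jn ki0 kj; have := thr_k i j ij jn kj; rewrite ki0 subn0. Qed.

Lemma thrifty_fill_used k m : fill_fits k -> fill_fits m ->
    \sum_(0 <= i < n) k i = \sum_(0 <= i < n) m i ->
    thrifty_fill k -> valid_fill m ->
  forall i, i < n -> 0 < k i -> 0 < m i.
Proof.
move=> fit_k fit_m sum_km thr_k val_m i ltin ki; rewrite lt0n; apply/negP => /eqP mi0.
have w_le_ci : w <= c i by apply: leq_trans (fit_k i ltin); rewrite leq_pmull.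
have m_after : forall j, i < j < n -> m j = 0.
  move=> j /andP[ij jn]; apply/eqP; rewrite eqn0Ngt; apply/negP => mj.
  by have := val_m i j ij jn mi0 mj; rewrite ltnNge w_le_ci.
have m_before : forall j, j < i -> m j <= k j.
  move=> j ji; have := thr_k j i ji ltin ki; have := fit_m j (ltn_trans ji ltin); nia.
have split_at_i f : \sum_(0 <= j < n) f j =
    \sum_(0 <= j < i) f j + f i + \sum_(i.+1 <= j < n) f j.
  by rewrite (big_cat_nat (leq0n i) (ltnW ltin)) /= (big_ltn ltin) addnA.
have m_tail0 : \sum_(i.+1 <= j < n) m j = 0.
  by rewrite big_nat_cond big1 // => j /andP[/andP[ij jn] _]; apply: m_after; rewrite ij.
have sum_m_le : \sum_(0 <= j < n) m j <= \sum_(0 <= j < i) k j.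
  rewrite split_at_i mi0 m_tail0 !addn0 big_nat_cond [leqRHS]big_nat_cond.
  by apply: leq_sum => j /andP[/andP[_ /m_before]].
move: sum_m_le; rewrite -sum_km split_at_i; lia.
Qed.

Lemma thrifty_fill_cost_le k m : fill_fits k -> fill_fits m ->
    \sum_(0 <= i < n) k i = \sum_(0 <= i < n) m i ->
    thrifty_fill k -> valid_fill m ->
  fill_cost k <= fill_cost m.
Proof.
move=> fit_k fit_m sum_km thr_k val_m.
rewrite /fill_cost big_nat_cond [leqRHS]big_nat_cond.
apply: leq_sum => i /andP[/andP[_ ltin] _]; case: ifP => // ki.
by rewrite (thrifty_fill_used fit_k fit_m sum_km thr_k val_m ltin ki).
Qed.

End SingleSizeFill.

Fixpoint greedy_fill (w r : nat) (cs : seq nat) : seq nat :=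
  if cs is c :: cs' then
    let t := minn r (c %/ w) in t :: greedy_fill w (r - t) cs'
  else [::].

Lemma size_greedy_fill w r cs : size (greedy_fill w r cs) = size cs.
Proof. by elim: cs r => //= c cs IH r; rewrite IH. Qed.

Lemma sumn_greedy_fill_le w r cs : sumn (greedy_fill w r cs) <= r.
Proof. by elim: cs r => //= c cs IH r; have := IH (r - minn r (c %/ w)); lia. Qed.

Lemma sumn_greedy_fill w r cs :
  r <= sumn [seq c %/ w | c <- cs] -> sumn (greedy_fill w r cs) = r.
Proof.
elim: cs r => [|c cs IH] r /=; first by rewrite leqn0 => /eqP.
by move=> r_le; rewrite IH; lia.
Qed.

Lemma greedy_fill_fits w r cs :
  fill_fits w (size cs) (nth 0 cs) (nth 0 (greedy_fill w r cs)).
Proof.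
move=> i _; elim: cs r i => [|c cs IH] r [|i] //=.
by apply: leq_trans (leq_divM c w); rewrite leq_mul2r geq_minr orbT.
Qed.

Lemma leq_nth_sumn (s : seq nat) i : nth 0 s i <= sumn s.
Proof.
by elim: s i => [|x s IH] [|i] //=; [rewrite leq_addr | rewrite (leq_trans (IH i)) ?leq_addl].
Qed.

Lemma greedy_fill_thrifty w r cs : 0 < w ->
  thrifty_fill w (size cs) (nth 0 cs) (nth 0 (greedy_fill w r cs)).
Proof.
move=> w_gt0; elim: cs r => [|c cs IH] r [|i] [|j] //= ij jn kj; last exact: (IH _ i j).
have rest_pos := leq_trans kj (leq_nth_sumn _ j).
have rest_le := sumn_greedy_fill_le w (r - minn r (c %/ w)) cs.
have := divn_eq c w; have := ltn_pmod c w_gt0.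
by case: (leqP r (c %/ w)) rest_le rest_pos; lia.
Qed.

Definition item_count (b : bool) (x : nat * nat) : nat := if b then x.2 else x.1.
Definition single_bin (b : bool) (t : nat) : nat * nat := if b then (0, t) else (t, 0).
Definition item_size (S : nat) (b : bool) : nat := if b then Lsz S else S.

Lemma item_count_sumn b (p : packing) :
  sumn (map (item_count b) p) = item_count b (sumn (map fst p), sumn (map snd p)).
Proof. by case: b. Qed.

Lemma sumn_map_single_bin b (g : seq nat) :
  (sumn (map fst (map (single_bin b) g)), sumn (map snd (map (single_bin b) g))) =
  single_bin b (sumn g).
Proof. by case: b; elim: g => //= t g [-> ->]. Qed.

Lemma binc_map_single_bin b g i : binc (map (single_bin b) g) i = single_bin b (nth 0 g i).
Proof. by rewrite /binc; case: b; elim: g i => [|t g IH] [|i] //=. Qed.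

Lemma front_len_eq0 (p : packing) :
  (sumn (map snd p) == 0) || (sumn (map fst p) <= 2) -> front_len p = 0.
Proof. by rewrite /front_len /= drop0 => ->. Qed.

Section SingleSizePacking.
Variables (S : nat) (b : bool) (sigma : seq nat) (p : packing).
Hypothesis size_p : size p = size sigma.
Hypothesis other_count0 : forall i, item_count (~~ b) (binc p i) = 0.

Lemma load_single i : load S (binc p i) = item_count b (binc p i) * item_size S b.
Proof. by have := other_count0 i; rewrite /load /item_size; case: b => /= ->; lia. Qed.

Lemma nonempty_single i : nonempty (binc p i) = (0 < item_count b (binc p i)).
Proof. by have := other_count0 i; rewrite /nonempty; case: b => /= ->; rewrite ?addn0. Qed.

Lemma cost_single : cost sigma p =
  fill_cost (size sigma) (bsz sigma) (fun i => item_count b (binc p i)).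
Proof.
rewrite /cost sumnE big_map (big_nth (0, (0, 0))) size_zip size_p minnn.
by apply: eq_big_nat => i ltin; rewrite nth_zip // nonempty_single.
Qed.

Lemma sum_counts_single :
  \sum_(0 <= i < size sigma) item_count b (binc p i) = sumn (map (item_count b) p).
Proof. by rewrite sumnE big_map (big_nth (0, 0)) size_p. Qed.

Lemma thrifty_singleE : thrifty S sigma p <->
  thrifty_fill (item_size S b) (size sigma) (bsz sigma) (fun i => item_count b (binc p i)).
Proof.
split=> [thr_p i j ij jn kj | thr_k i _ [j [ij jn waste]]].
  rewrite -load_single ltnNge; apply/negP => waste.
  apply: (thr_p i); first by rewrite size_p (ltn_trans ij jn).
  by exists j; split; rewrite ?size_p //; move: kj waste; rewrite /item_size; case: b; auto.
rewrite size_p in jn; have := thr_k i j ij jn; rewrite -load_single.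
have := other_count0 j; rewrite /item_size.
by move: waste; case: b => /= [[[k0 w_le]|[k0 w_le]]|[[k0 w_le]|[k0 w_le]]]; lia.
Qed.

Lemma valid_singleE : valid S sigma p <->
  valid_fill (item_size S b) (size sigma) (bsz sigma) (fun i => item_count b (binc p i)).
Proof.
split=> [val_p i j ij jn ki0 kj | val_k i j ij jn].
  have empty_i : ~~ nonempty (binc p i) by rewrite nonempty_single ki0.
  rewrite -size_p in jn; have [small_S small_L] := val_p i j ij jn empty_i.
  by move: kj; rewrite /item_size; case: b; auto.
rewrite size_p in jn; rewrite nonempty_single -eqn0Ngt => /eqP ki0.
have := val_k i j ij jn ki0; have := other_count0 j; rewrite /item_size.
by case: b => /= -> small; split=> // /small.
Qed.

End SingleSizePacking.

Lemma single_size_packing S b sigma n p :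
    is_packing S sigma (single_bin b n).1 (single_bin b n).2 p ->
  [/\ size p = size sigma, forall i, item_count (~~ b) (binc p i) = 0,
      fill_fits (item_size S b) (size sigma) (bsz sigma) (fun i => item_count b (binc p i)) &
      sumn (map (item_count b) p) = n].
Proof.
move=> [size_p sum_fst sum_snd fit_p].
have sums : (sumn (map fst p), sumn (map snd p)) = single_bin b n.
  by rewrite sum_fst sum_snd; case: (b).
have other0 : sumn (map (item_count (~~ b)) p) = 0 by rewrite item_count_sumn sums; case: (b).
have other_count0 i : item_count (~~ b) (binc p i) = 0.
  have [ltip | leip] := ltnP i (size p); last by rewrite /binc nth_default //; case: (b).
  have := leq_nth_sumn (map (item_count (~~ b)) p) i.
  by rewrite (nth_map (0, 0)) // other0 leqn0 => /eqP.
split=> //; last by rewrite item_count_sumn sums; case: (b).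
by move=> i ltin; rewrite -(load_single S size_p other_count0) fit_p ?size_p.
Qed.

Lemma single_size_thrifty_valid S b sigma n p :
    is_packing S sigma (single_bin b n).1 (single_bin b n).2 p ->
  thrifty S sigma p -> valid S sigma p.
Proof.
case/single_size_packing=> size_p other0 _ _ /(thrifty_singleE S size_p other0) thr_p.
exact/(valid_singleE S size_p other0)/thrifty_fill_valid.
Qed.

Lemma single_size_reasonableE S b sigma n p :
    is_packing S sigma (single_bin b n).1 (single_bin b n).2 p ->
  reasonable S sigma p <-> thrifty S sigma p.
Proof.
move=> pack_p; split=> [[] // | thr_p]; split=> // i.
case: pack_p => _ sum_fst sum_snd _.
by rewrite front_len_eq0 // sum_fst sum_snd; case: (b); rewrite /= ?orbT.
Qed.

Lemma single_size_cost_le S b sigma n p q :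
    is_packing S sigma (single_bin b n).1 (single_bin b n).2 p ->
    is_packing S sigma (single_bin b n).1 (single_bin b n).2 q ->
  thrifty S sigma p -> valid S sigma q -> cost sigma p <= cost sigma q.
Proof.
move=> pack_p pack_q.
have [size_p other_p fit_p sum_p] := single_size_packing pack_p.
have [size_q other_q fit_q sum_q] := single_size_packing pack_q.
rewrite (thrifty_singleE S size_p other_p) (valid_singleE S size_q other_q) => thr_p val_q.
rewrite (cost_single size_p other_p) (cost_single size_q other_q).
apply: thrifty_fill_cost_le fit_p fit_q _ thr_p val_q.
by rewrite (sum_counts_single b size_p) (sum_counts_single b size_q) sum_p sum_q.
Qed.

Lemma admissible_capacity S sigma n w : 0 < w -> w <= Msz S -> admissible S sigma n ->
  n <= sumn [seq c %/ w | c <- sigma].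
Proof.
move=> w_gt0 w_le_M [n_le ends_M].
rewrite -(cat_take_drop (size sigma - n) sigma) map_cat sumn_cat (leq_trans _ (leq_addl _ _)) //.
have : size (drop (size sigma - n) sigma) = n by rewrite size_drop; lia.
have M_div_pos : 0 < Msz S %/ w by rewrite divn_gt0.
move: (drop _ sigma) ends_M => t; clear n_le.
elim: t n => [|c t IH] [|n] //= /andP[/eqP -> ends_M] [size_t].
by have := IH n ends_M size_t; lia.
Qed.

Definition greedy_packing (S : nat) (b : bool) (n : nat) (sigma : seq nat) : packing :=
  map (single_bin b) (greedy_fill (item_size S b) n sigma).

Lemma greedy_packing_single S b n sigma : 0 < S -> admissible S sigma n ->
  let g := greedy_packing S b n sigma in
  is_packing S sigma (single_bin b n).1 (single_bin b n).2 g /\ thrifty S sigma g.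
Proof.
move=> S_gt0 adm g.
have size_pos : 0 < item_size S b by rewrite /item_size /Lsz; case: (b); lia.
have size_le_M : item_size S b <= Msz S by rewrite /item_size /Lsz /Msz; case: (b); lia.
have size_g : size g = size sigma by rewrite size_map size_greedy_fill.
have count_g i : item_count b (binc g i) = nth 0 (greedy_fill (item_size S b) n sigma) i.
  by rewrite binc_map_single_bin; case: (b).
have other_g i : item_count (~~ b) (binc g i) = 0 by rewrite binc_map_single_bin; case: (b).
have sums : (sumn (map fst g), sumn (map snd g)) = single_bin b n.
  by rewrite sumn_map_single_bin sumn_greedy_fill // (admissible_capacity size_pos size_le_M adm).
split; last first.
  apply/(thrifty_singleE S size_g other_g) => i j.
  by rewrite !count_g; apply: greedy_fill_thrifty.
split=> //; [by rewrite -sums | by rewrite -sums | move=> i ltig].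
by rewrite (load_single S size_g other_g) count_g; apply: greedy_fill_fits; rewrite -size_g.
Qed.

Lemma single_size_OPT_R S b sigma n : 0 < S -> admissible S sigma n ->
  let items := single_bin b n in
  exists v, IsOPT S sigma items.1 items.2 v /\ IsR S sigma items.1 items.2 v.
Proof.
move=> S_gt0 adm items.
have [pack_g thr_g] := greedy_packing_single b S_gt0 adm.
set g := greedy_packing S b n sigma in pack_g thr_g.
have val_g := single_size_thrifty_valid pack_g thr_g.
exists (cost sigma g); split; split.
- by exists g.
- by move=> q pack_q val_q; apply: single_size_cost_le pack_g pack_q thr_g val_q.
- by exists g; split=> //; apply/(single_size_reasonableE pack_g).
- move=> q pack_q /(single_size_reasonableE pack_q) thr_q.
  exact: single_size_cost_le pack_q pack_g thr_q val_g.
Qed.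

Theorem proposition3 (S : nat) (sigma : seq nat) :
  1 < S ->
  all (fun c => (S <= c) && (c <= Msz S)) sigma ->
  (forall s', admissible S sigma s' ->
     exists v, IsOPT S sigma s' 0 v /\ IsR S sigma s' 0 v) /\
  (forall l', admissible S sigma l' ->
     exists v, IsOPT S sigma 0 l' v /\ IsR S sigma 0 l' v).
Proof.
move=> /ltnW S_gt0 _; split=> n adm.
- exact: (single_size_OPT_R false S_gt0 adm).
- exact: (single_size_OPT_R true S_gt0 adm).
Qed.
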